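(* Let $G$ be a finite abelian group, $T \subsetneq G$ a non-empty subset, and fix $x \in G$ with $T + x \ne T$. Put $T^{\uparrow} = T + x$, $C^{\uparrow} = T^{\uparrow}\setminus T$, $C^{\downarrow} = T \setminus T^{\uparrow}$ and $A = T \cup T^{\uparrow}$. For integers $1 \le i \le d$ let $C_{i,d} = C^{\downarrow}\times\dots\times C^{\downarrow}\times C^{\uparrow}\times C^{\downarrow}\times\dots\times C^{\downarrow} \subset A^d$ (with $d$ factors, $C^{\uparrow}$ in the $i$-th factor), and let $C_{0,d} = (C^{\downarrow})^d$. Then for any integers $d \ge 1$ and $0 \le i \le d$, the set $A^d \setminus C_{i,d} \subset G^d$ is $T$-tilable.
   Context: A copy of $T$ in $G^d$ is a translate $\mathsf{T}_j + y$ ($y\in G^d$, $1\le j\le d$), where $\mathsf{T}_j\subset G^d$ is the set of points with $j$-th coordinate in $T$ and all other coordinates $0$. A subset of $G^d$ is $T$-tilable if it is a disjoint union of copies of $T$. *)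

From mathcomp Require Import all_boot all_order all_algebra.
Set Implicit Arguments. Unset Strict Implicit. Unset Printing Implicit Defensive.
Import GRing.Theory.
Local Open Scope ring_scope.

(* G^d is modelled as {ffun 'I_d -> G}; coordinates are indexed 0..d-1. *)

Definition translate (G : finZmodType) (T : {set G}) (x : G) : {set G} :=
  [set t + x | t in T].

Definition evec (G : finZmodType) (d : nat) (j : 'I_d) (t : G) : {ffun 'I_d -> G} :=
  [ffun k => if k == j then t else 0].

Definition copyT (G : finZmodType) (d : nat) (T : {set G}) (j : 'I_d)
  (y : {ffun 'I_d -> G}) : {set {ffun 'I_d -> G}} :=
  [set [ffun k => y k + evec j t k] | t in T].

Definition is_copy (G : finZmodType) (d : nat) (T : {set G})
  (B : {set {ffun 'I_d -> G}}) : Prop :=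
  exists (j : 'I_d) (y : {ffun 'I_d -> G}), B = copyT T j y.

Definition tilable (G : finZmodType) (d : nat) (T : {set G})
  (S : {set {ffun 'I_d -> G}}) : Prop :=
  exists P : {set {set {ffun 'I_d -> G}}},
    (forall B, B \in P -> is_copy T B) /\ trivIset P /\ cover P = S.

Definition powset (G : finZmodType) (d : nat) (A : {set G}) : {set {ffun 'I_d -> G}} :=
  [set v : {ffun 'I_d -> G} | [forall k, v k \in A]].

(* C_{i,d}: Cup in the i-th factor (1-based, i.e. coordinate k with k.+1 = i),
   Cdown elsewhere; for i = 0 this is Cdown^d. *)
Definition Cid (G : finZmodType) (d i : nat) (Cup Cdown : {set G})
  : {set {ffun 'I_d -> G}} :=
  [set v : {ffun 'I_d -> G} | [forall k : 'I_d, v k \in (if k.+1 == i then Cup else Cdown)]].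

From mathcomp Require Import all_boot all_order all_algebra.
Set Implicit Arguments. Unset Strict Implicit. Unset Printing Implicit Defensive.
Import GRing.Theory.
Local Open Scope ring_scope.

(* Suppose that in every coordinate k the set A splits as D_k plus a translate
   T + s_k.  A point w of A^d outside D_0 x ... x D_(d-1) has a first coordinate
   j with w_j outside D_j, i.e. w_j in T + s_j; it lies in the copy T_j + y of T
   where y agrees with w off j and y_j = s_j.  Two points get the same copy
   exactly when they have the same first exit coordinate j and agree off j, so
   these copies partition A^d minus the box.  For the proposition take
   D_k = C^down, s_k = x off the distinguished coordinate, and D_k = C^up,
   s_k = 0 on it. *)

Lemma mem_translate (G : finZmodType) (T : {set G}) x w :
  (w \in translate T x) = (w - x \in T).
Proof.
apply/imsetP/idP => [[t tT ->]|wxT]; first by rewrite addrK.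
by exists (w - x); rewrite ?subrK.
Qed.

Lemma translate0 (G : finZmodType) (T : {set G}) : translate T 0 = T.
Proof. by apply/setP => w; rewrite mem_translate subr0. Qed.

Lemma setDUK (G : finType) (B C : {set G}) : (B :\: C) :|: C = B :|: C.
Proof. by apply/setP => a; rewrite !inE; case: (a \in C); rewrite ?orbT ?andbT. Qed.

Lemma disjoint_setDl (G : finType) (B C : {set G}) : [disjoint B :\: C & C].
Proof. by have /subsetDP[] := subxx (B :\: C). Qed.

Lemma mem_copyT (G : finZmodType) d (T : {set G}) (j : 'I_d) y w :
  (w \in copyT T j y) =
  (w j \in translate T (y j)) && [forall k, (k != j) ==> (w k == y k)].
Proof.
rewrite mem_translate; apply/imsetP/andP => [[t tT ->]|[wT /forallP wy]].
  rewrite !ffunE eqxx (addrC (y j)) addrK; split => //.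
  by apply/forallP => k; apply/implyP => kj; rewrite !ffunE (negbTE kj) addr0.
exists (w j - y j) => //; apply/ffunP => k; rewrite !ffunE.
case: eqVneq => [->|kj]; first by rewrite addrC subrK.
by rewrite addr0; apply/eqP; exact: implyP (wy k) kj.
Qed.

Section BoxComplementTiling.

Variables (G : finZmodType) (T : {set G}) (d : nat) (A : {set G}).
Variables (D : 'I_d -> {set G}) (s : 'I_d -> G).
Hypothesis cover_Dk : forall k, D k :|: translate T (s k) = A.
Hypothesis disjoint_Dk : forall k, [disjoint D k & translate T (s k)].

Definition boxset : {set {ffun 'I_d -> G}} :=
  [set v : {ffun 'I_d -> G} | [forall k, v k \in D k]].

Definition first_exit (j : 'I_d) (w : {ffun 'I_d -> G}) :=
  (w j \notin D j) && [forall k : 'I_d, (k < j)%N ==> (w k \in D k)].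

Definition anchor (j : 'I_d) (w : {ffun 'I_d -> G}) : {ffun 'I_d -> G} :=
  [ffun k => if k == j then s j else w k].

Lemma mem_translate_exit k a :
  (a \in translate T (s k)) = (a \in A) && (a \notin D k).
Proof.
rewrite -(cover_Dk k) inE; have := disjoint_Dk k.
by rewrite disjoint_sym => /pred0P/(_ a) /=; case: (a \in D k); case: (a \in _).
Qed.

Lemma first_exit_unique j1 j2 w : first_exit j1 w -> first_exit j2 w -> j1 = j2.
Proof.
case/andP=> out1 /forallP in1 /andP[out2 /forallP in2].
case: (ltngtP j1 j2) => [lt12|lt21|/val_inj//].
  by rewrite (implyP (in2 j1) lt12) in out1.
by rewrite (implyP (in1 j2) lt21) in out2.
Qed.

Lemma first_exit_exists w : w \notin boxset -> exists j, first_exit j w.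
Proof.
rewrite inE => /forallPn[k0 out0].
case: (@arg_minnP _ k0 (fun k => w k \notin D k) val out0) => j outj jmin.
exists j; rewrite /first_exit outj; apply/forallP => k; apply/implyP => ltkj.
by apply/negPn/negP => /jmin; rewrite leqNgt ltkj.
Qed.

Lemma mem_copy_anchor j (w w' : {ffun 'I_d -> G}) :
  (w \in copyT T j (anchor j w')) =
  (w j \in translate T (s j)) && [forall k, (k != j) ==> (w k == w' k)].
Proof.
rewrite mem_copyT ffunE eqxx; congr (_ && _); apply: eq_forallb => k.
by rewrite ffunE; case: eqVneq.
Qed.

Lemma anchor_eq j (w w' : {ffun 'I_d -> G}) :
  [forall k, (k != j) ==> (w k == w' k)] -> anchor j w = anchor j w'.
Proof.
move=> /forallP ww'; apply/ffunP => k; rewrite !ffunE.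
by case: eqVneq => // kj; apply/eqP; exact: implyP (ww' k) kj.
Qed.

Definition exit_copies : {set {set {ffun 'I_d -> G}}} :=
  [set copyT T jw.1 (anchor jw.1 jw.2) |
     jw in [set jw | (jw.2 \in powset d A) && first_exit jw.1 jw.2]].

Lemma mem_exit_copy j (w w' : {ffun 'I_d -> G}) :
  w' \in powset d A -> first_exit j w' -> w \in copyT T j (anchor j w') ->
  [/\ w \in powset d A, first_exit j w & anchor j w = anchor j w'].
Proof.
move=> /[!inE] /forallP w'A /andP[_ /forallP w'in].
rewrite mem_copy_anchor mem_translate_exit => /andP[/andP[wjA wjout] ww'].
have agree k : k != j -> w k = w' k.
  by move=> kj; apply/eqP; exact: implyP (forallP ww' k) kj.
split; last exact: anchor_eq.
- apply/forallP => k; case: (eqVneq k j) => [->//|kj]; by rewrite agree.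
- rewrite /first_exit wjout; apply/forallP => k; apply/implyP => ltkj.
  rewrite agree ?(implyP (w'in k) ltkj) //.
  by apply: contraTneq ltkj => ->; rewrite ltnn.
Qed.

Lemma mem_self_exit_copy j w :
  w \in powset d A -> first_exit j w -> w \in copyT T j (anchor j w).
Proof.
rewrite inE => /forallP wA /andP[wjout _].
rewrite mem_copy_anchor mem_translate_exit wA wjout.
by apply/forallP => k; apply/implyP.
Qed.

Lemma cover_exit_copies : cover exit_copies = powset d A :\: boxset.
Proof.
apply/setP => w; apply/bigcupP/setDP.
  case=> _ /imsetP[[j w'] /[1!inE] /andP[w'A exit'] ->].
  move=> /(mem_exit_copy w'A exit')[wA /andP[wjout _] _]; split => //.
  by rewrite inE; apply: contra wjout => /forallP.
case=> wA /first_exit_exists[j exitj]; exists (copyT T j (anchor j w)).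
  by apply/imsetP; exists (j, w); rewrite // inE wA exitj.
exact: mem_self_exit_copy.
Qed.

Lemma trivIset_exit_copies : trivIset exit_copies.
Proof.
apply/trivIsetP => B1 B2 /imsetP[[j1 w1] /[1!inE] /andP[w1A exit1] ->].
move=> /imsetP[[j2 w2] /[1!inE] /andP[w2A exit2] ->] /= neq.
rewrite -setI_eq0; apply/set0Pn => -[w /setIP[in1 in2]]; apply/negP: neq.
have [_ exitw1 anchor1] := mem_exit_copy w1A exit1 in1.
have [_ exitw2 anchor2] := mem_exit_copy w2A exit2 in2.
have ej : j1 = j2 := first_exit_unique exitw1 exitw2.
by subst j2; rewrite /= in anchor1 anchor2; rewrite negbK -anchor1 -anchor2.
Qed.

Lemma tilable_box_complement : tilable T (powset d A :\: boxset).
Proof.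
exists exit_copies; split; last split.
- by move=> _ /imsetP[jw _ ->]; exists jw.1, (anchor jw.1 jw.2).
- exact: trivIset_exit_copies.
- exact: cover_exit_copies.
Qed.

End BoxComplementTiling.

Theorem proposition10 (G : finZmodType) (T : {set G}) (x : G)
  (hT0 : T != set0) (hTG : T \proper [set: G])
  (hx : translate T x != T) (d i : nat) (hd : (1 <= d)%N) (hi : (i <= d)%N) :
  let Tup := translate T x in
  let Cup := Tup :\: T in
  let Cdown := T :\: Tup in
  let A := T :|: Tup in
  tilable T (powset d A :\: Cid d i Cup Cdown).
Proof.
move=> Tup Cup Cdown A.
pose s (k : 'I_d) := if k.+1 == i then 0 else x.
apply: (@tilable_box_complement G T d A _ s) => k.
all: by rewrite /s; case: ifP => _; rewrite ?translate0 ?setDUK ?disjoint_setDl // setUC.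
Qed.
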